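(* Let $G$ be a torsion-free metrizable abelian topological group in which every cyclic subgroup is discrete. The following are equivalent: (i) $G$ is not NSS; (ii) $G$ contains a subgroup topologically isomorphic to $\mathbb{Z}^{(\mathbb{N})}$. If $G$ is also complete, then the following is equivalent to (i) and (ii): (iii) $G$ contains a subgroup topologically isomorphic to $\mathbb{Z}^{\mathbb{N}}$.
   Context: $\mathbb{Z}^{\mathbb{N}}$ carries the Tychonoff product topology with $\mathbb{Z}$ discrete, and $\mathbb{Z}^{(\mathbb{N})}$ is its subgroup of finitely supported sequences with the subspace topology. A topological group is NSS if it has a neighbourhood of the identity containing no non-trivial subgroup. *)

From HB Require Import structures.
From mathcomp Require Import all_boot all_order all_algebra.
From mathcomp Require Import all_classical all_reals all_analysis.
From mathcomp Require Import Rstruct.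
Import GRing.Theory Num.Theory.

Set Implicit Arguments.
Unset Strict Implicit.
Unset Printing Implicit Defensive.

Local Open Scope classical_set_scope.
Local Open Scope ring_scope.

(** Z with the discrete topology, and Z^N := functions nat -> Z with the
    Tychonoff product (= pointwise) topology. *)
Definition Zdisc := discrete_topology int.
Definition ZN := {ptws nat -> Zdisc}.

(** Z^(N): the finitely supported sequences (a subset of Z^N, given the
    subspace topology below). *)
Definition finsupp : set ZN :=
  [set a | exists N : nat, forall n : nat, (N <= n)%N -> a n = 0].

Definition is_subgroup (G : zmodType) (H : set G) : Prop :=
  H 0 /\ (forall x y, H x -> H y -> H (x - y)).

Definition NSS (G : topologicalZmodType) : Prop :=
  exists U : set G, nbhs (0 : G) U /\
    forall H : set G, is_subgroup H -> H `<=` U -> H = [set 0].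

Definition torsion_free (G : zmodType) : Prop :=
  forall (x : G) (n : nat), (0 < n)%N -> x *+ n = 0 -> x = 0.

Definition cyclic_sub (G : zmodType) (x : G) : set G :=
  [set y | exists k : int, y = x *~ k].

Definition discrete_subset (T : topologicalType) (A : set T) : Prop :=
  forall y, A y -> exists U : set T, nbhs y U /\ forall z, A z -> U z -> z = y.

Definition cyclic_subgroups_discrete (G : topologicalZmodType) : Prop :=
  forall x : G, discrete_subset (cyclic_sub x).

Definition metrizable (T : topologicalType) : Prop :=
  exists d : T -> T -> Rdefinitions.R,
    (forall x y, 0 <= d x y) /\
    (forall x y, d x y = 0 <-> x = y) /\
    (forall x y, d x y = d y x) /\
    (forall x y z, d x z <= d x y + d y z) /\
    (forall (x : T) (U : set T),
        nbhs x U <-> exists2 e : Rdefinitions.R, 0 < e & forall y, d x y < e -> U y).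

(** Cauchy sequences for the (two-sided = left = right, G abelian) group
    uniformity, and completeness.  For metrizable groups this is equivalent
    to completeness w.r.t. any compatible invariant metric. *)
Definition group_cauchy (G : topologicalZmodType) (x : nat -> G) : Prop :=
  forall U : set G, nbhs (0 : G) U ->
    exists N : nat, forall m n : nat, (N <= m)%N -> (N <= n)%N -> U (x m - x n).

Definition group_complete (G : topologicalZmodType) : Prop :=
  forall x : nat -> G, group_cauchy x -> exists l : G, x @ \oo --> l.

Definition top_group_embedding (A : set ZN) (G : topologicalZmodType)
    (f : ZN -> G) : Prop :=
  (forall a b, A a -> A b -> f (a + b) = f a + f b) /\
  (forall a b, A a -> A b -> f a = f b -> a = b) /\
  (forall a, A a -> forall V : set G, nbhs (f a) V ->
      exists U : set ZN, nbhs a U /\ forall b, A b -> U b -> V (f b)) /\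
  (forall a, A a -> forall U : set ZN, nbhs a U ->
      exists V : set G, nbhs (f a) V /\ forall b, A b -> V (f b) -> U b).

Definition contains_copy_of (A : set ZN) (G : topologicalZmodType) : Prop :=
  exists H : set G, is_subgroup H /\
    exists f : ZN -> G, f @` A = H /\ top_group_embedding A f.

From HB Require Import structures.
From mathcomp Require Import all_boot all_order all_algebra.
From mathcomp Require Import all_classical all_reals all_analysis.
From mathcomp Require Import Rstruct.
From mathcomp Require Import lra.
Import Order.TTheory GRing.Theory Num.Theory.

Set Implicit Arguments.
Unset Strict Implicit.
Unset Printing Implicit Defensive.
Local Open Scope classical_set_scope.
Local Open Scope ring_scope.

(* If G is not NSS, choose inductively y_k <> 0 and symmetric neighbourhoods
   V_(k+1) of 0, shrinking to 0, with V_(k+1) + V_(k+1) <= V_k,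
   <y_k> + V_(k+1) <= V_k and <y_k> meeting V_(k+1) - V_(k+1) only in 0: some
   non-trivial subgroup, hence some <y_k>, fits into any neighbourhood of 0,
   while <y_k> is discrete and infinite.  For c in Z^N the partial sums of
   sum_k c_k y_k are eventually constant if c is finitely supported, and Cauchy
   in general.  Their limit is a topological isomorphism onto its image: it
   lies in V_(k+1) only if c vanishes below k, and in V_k if c vanishes below
   k+1, so the V_k correspond to the cylinder neighbourhoods of Z^N.
   Conversely, the sequences vanishing on an initial segment form arbitrarily
   small non-trivial subgroups of Z^(N) and of Z^N. *)

Lemma iterate_choice (X Y : Type) (P : X -> Prop)
    (R : nat -> X -> Y -> X -> Prop) (x0 : X) :
  P x0 -> (forall k x, P x -> exists y x', P x' /\ R k x y x') ->
  exists (y : nat -> Y) (x : nat -> X),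
    x 0%N = x0 /\ forall k, P (x k) /\ R k (x k) (y k) (x k.+1).
Proof.
move=> Px0 step; have [y0 _] := step 0%N x0 Px0.
have /choice[next Pnext] : forall kx : nat * X, exists yx : Y * X,
    P kx.2 -> P yx.2 /\ R kx.1 kx.2 yx.1 yx.2.
  move=> [k x]; have [Px|nPx] := pselect (P x); last by exists (y0, x).
  by have [y [x' ?]] := step k x Px; exists (y, x').
pose x := fix x k := if k is k'.+1 then (next (k', x k')).2 else x0.
have Px k : P (x k) by elim: k => [|k IH] //=; case: (Pnext (k, x k) IH).
exists (fun k => (next (k, x k)).1), x; split=> // k.
by split=> //; case: (Pnext (k, x k) (Px k)).
Qed.

Section Subgroup.
Variables (M : zmodType) (H : set M).
Hypothesis subH : is_subgroup H.

Lemma subgroup0 : H 0.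
Proof. by case: subH. Qed.

Lemma subgroupB x y : H x -> H y -> H (x - y).
Proof. by case: subH => _; apply. Qed.

Lemma subgroupN x : H x -> H (- x).
Proof. by move=> Hx; rewrite -sub0r; apply: subgroupB => //; exact: subgroup0. Qed.

Lemma subgroupD x y : H x -> H y -> H (x + y).
Proof. by move=> Hx Hy; rewrite -[y]opprK; apply: subgroupB => //; exact: subgroupN. Qed.

Lemma subgroup_mulrz x (m : int) : H x -> H (x *~ m).
Proof.
move=> Hx; have Hn n : H (x *+ n).
  by elim: n => [|n IH]; [rewrite mulr0n; exact: subgroup0|rewrite mulrS; exact: subgroupD].
by case: m => n; rewrite ?NegzE ?mulrNz -pmulrn //; exact: subgroupN.
Qed.

Lemma subgroupI (K : set M) : is_subgroup K -> is_subgroup (H `&` K).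
Proof.
case=> K0 KB; split; first by split; first exact: subgroup0.
by move=> x y [Hx Kx] [Hy Ky]; split; [exact: subgroupB|exact: KB].
Qed.

Lemma additive_onB (N : zmodType) (f : M -> N) :
    (forall a b, H a -> H b -> f (a + b) = f a + f b) ->
  forall a b, H a -> H b -> f (a - b) = f a - f b.
Proof.
move=> fD a b Ha Hb; apply/eqP; rewrite eq_sym subr_eq -fD ?subrK //.
exact: subgroupB.
Qed.

Lemma subgroup_image (N : zmodType) (f : M -> N) (K : set M) :
    (forall a b, H a -> H b -> f (a - b) = f a - f b) ->
  is_subgroup K -> K `<=` H -> is_subgroup (f @` K).
Proof.
move=> fB [K0 KB] KH; split.
  by exists 0 => //; rewrite -(subrr 0) fB ?subrr //; exact: subgroup0.
move=> _ _ [a Ka <-] [b Kb <-]; exists (a - b); first exact: KB.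
exact: fB (KH _ Ka) (KH _ Kb).
Qed.

End Subgroup.

Lemma torsion_free_mulrz_eq0 (M : zmodType) (y : M) (m : int) :
  torsion_free M -> y != 0 -> y *~ m = 0 -> m = 0.
Proof.
move=> tf y0; have tf' n : y *+ n.+1 = 0 -> False.
  by move=> /(tf y n.+1 isT) y_eq0; rewrite y_eq0 eqxx in y0.
case: m => n; rewrite ?NegzE ?mulrNz -pmulrn.
  by case: n => [//|n] /tf'.
by move/eqP; rewrite oppr_eq0 => /eqP/tf'.
Qed.

Definition cylinder (K : nat) (a : ZN) : set ZN :=
  [set b | forall i, (i < K)%N -> b i = a i].

Definition delta_seq (K : nat) : ZN := fun i => ((i == K) : nat)%:Z.

Lemma nbhs_coord (a : ZN) (t : nat) : nbhs a [set b : ZN | b t = a t].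
Proof.
have /(_ _ t) := (@pointwise_cvgP nat Zdisc (nbhs a) a _).1 (@cvg_id _ (nbhs a)).
by move/(@discrete_cvg Zdisc _ (a t) _).1; apply.
Qed.

Lemma cylinder_nbhs (K : nat) (a : ZN) : nbhs a (cylinder K a).
Proof.
elim: K => [|K IH]; first by apply: filterS filterT => b _ i.
apply: filterS (filterI IH (nbhs_coord a K)) => b [bK bKa] i.
by rewrite ltnS leq_eqVlt => /orP[/eqP->|/bK].
Qed.

Lemma nbhs_cylinder (a : ZN) (U : set ZN) : nbhs a U -> exists K, cylinder K a `<=` U.
Proof.
move=> aU; apply: contrapT => noK.
have /choice[b bK] : forall K, exists b, cylinder K a b /\ ~ U b.
  move=> K; apply: contrapT => nb; apply: noK; exists K => b Kb.
  by apply: contrapT => nUb; apply: nb; exists b.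
have /(_ U aU)[N _ /(_ N (leqnn N))] : b @ \oo --> a.
  apply/(@pointwise_cvgP nat Zdisc) => t; apply/(@discrete_cvg Zdisc).
  by exists t.+1 => // n /= tn; exact: (bK n).1.
exact: (bK N).2.
Qed.

Lemma cylinder0_subgroup (K : nat) : is_subgroup (cylinder K 0).
Proof.
split=> // a b a0 b0 i iK.
by change (a i - b i = 0); rewrite a0 // b0 // subrr.
Qed.

Lemma finsupp_subgroup : is_subgroup finsupp.
Proof.
split; first by exists 0%N.
move=> a b [N aN] [M bM]; exists (maxn N M) => n; rewrite geq_max => /andP[Nn Mn].
by change (a n - b n = 0); rewrite aN // bM // subrr.
Qed.

Lemma finsupp_delta (K : nat) : finsupp (delta_seq K).
Proof. by exists K.+1 => n Kn; rewrite /delta_seq gtn_eqF. Qed.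

Section TopologicalGroup.
Variable G : topologicalZmodType.

Definition symmetric_set (W : set G) := forall x, W x -> W (- x).

Lemma nbhs_translate (x : G) (N : set G) : nbhs x N <-> nbhs 0 (fun z => N (x + z)).
Proof.
have translate_cont (a : G) : continuous (fun z : G => a + z).
  move=> z; apply: (@continuous_comp _ _ _ (fun z => (a, z)) (fun p : G * G => p.1 + p.2)).
    by apply: cvg_pair; [exact: cvg_cst|exact: cvg_id].
  exact: add_continuous.
split=> [xN|N0]; first by apply: translate_cont; rewrite /= addr0.
have := translate_cont (- x) x; rewrite /continuous_at addNr => /(_ _ N0).
move=> N0x; have {N0x} : nbhs x ((fun z => N (x + z)) \o +%R (- x)) by [].
by apply: filterS => z /=; rewrite addrA subrr add0r.
Qed.

Lemma nbhs0_sub (x : G) (V : set G) : nbhs 0 V -> nbhs x (fun y => V (y - x)).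
Proof. by move=> V0; apply/nbhs_translate; apply: filterS V0 => z; rewrite addrC addKr. Qed.

Lemma nbhs0_symmetric_half (V : set G) : nbhs 0 V ->
  exists W, [/\ nbhs 0 W, symmetric_set W & forall a b, W a -> W b -> V (a + b)].
Proof.
move=> V0; have : nbhs ((0 : G), (0 : G)) [set p : G * G | V (p.1 + p.2)].
  by apply: add_continuous; rewrite /= addr0.
case=> -[A B] /= [A0 B0] AB; pose W := A `&` B.
have W0 : nbhs 0 W by exact: filterI.
exists (W `&` (fun x => W (- x))); split.
- by apply: filterI => //; apply: opp_continuous; rewrite /= oppr0.
- by move=> x [? ?]; split; rewrite ?opprK.
- by move=> a b [[aA _] _] [[_ bB] _]; exact: (AB (a, b)).
Qed.

Lemma cvg_addG (T : Type) (F : set_system T) (u v : T -> G) (a b : G) :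
  Filter F -> u @ F --> a -> v @ F --> b -> (fun t => u t + v t) @ F --> a + b.
Proof. by move=> FF ua vb; exact: cvg_comp (cvg_pair ua vb) (@add_continuous G (a, b)). Qed.

Lemma not_NSS_cyclic_sub (U : set G) : ~ NSS G -> nbhs 0 U ->
  exists2 y : G, y != 0 & cyclic_sub y `<=` U.
Proof.
move=> nNSS U0; apply: contrapT => noy; apply: nNSS; exists U; split=> // H subH HU.
apply/seteqP; split=> [x Hx|_ ->]; last exact: subgroup0.
apply/eqP; apply: contrapT => /negP x0; apply: noy; exists x => // _ [m ->].
by apply/HU; exact: subgroup_mulrz.
Qed.

End TopologicalGroup.

Section Metrizable.
Variable T : topologicalType.
Hypothesis metT : metrizable T.

Lemma metrizable_hausdorff : hausdorff_space T.
Proof.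
case: metT => d [d_ge0 [d_eq0 [dC [d_tri d_nbhs]]]] p q pq.
apply: contrapT => /eqP/negPf pNq.
have dpq : 0 < d p q.
  by rewrite lt_neqAle d_ge0 andbT eq_sym; apply/negbT/eqP => /d_eq0/eqP; rewrite pNq.
have ball_nbhs x : nbhs x [set y | d x y < d p q / 2].
  by apply/d_nbhs; exists (d p q / 2) => //; lra.
have [z [/= pz qz]] := pq _ _ (ball_nbhs p) (ball_nbhs q).
by have := d_tri p z q; rewrite (dC z q); lra.
Qed.

Lemma metrizable_countable_nbhs (x : T) : exists B : nat -> set T,
  (forall k, nbhs x (B k)) /\ (forall U, nbhs x U -> exists k, B k `<=` U).
Proof.
case: metT => d [_ [_ [_ [_ d_nbhs]]]].
exists (fun k => [set y | d x y < k.+1%:R^-1]); split.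
  by move=> k; apply/d_nbhs; exists k.+1%:R^-1.
move=> U /d_nbhs[e e0 eU].
have [k _ /(_ k (leqnn k)) ke] := near_infty_natSinv_lt (PosNum e0).
by exists k => y /= xy; apply: eU; exact: lt_trans ke.
Qed.

End Metrizable.

Record adapted (G : topologicalZmodType) (y : nat -> G) (V : nat -> set G) : Prop := {
  adapted_nbhs : forall k, nbhs 0 (V k);
  adapted_shrink : forall U, nbhs 0 U -> exists k, V k `<=` U;
  adapted_sym : forall k, symmetric_set (V k);
  adapted_add : forall k a b, V k.+1 a -> V k.+1 b -> V k (a + b);
  adapted_cyclic : forall k m t, V k.+1 t -> V k (y k *~ m + t);
  adapted_discrete : forall k m t u, V k.+1 t -> V k.+1 u -> y k *~ m = u - t -> m = 0 }.

Section Construction.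
Variable G : topologicalZmodType.
Hypotheses (tfG : torsion_free G) (cdG : cyclic_subgroups_discrete G) (nNSS : ~ NSS G).

Definition refines (V : set G) (y : G) (W : set G) : Prop :=
  [/\ forall a b, W a -> W b -> V (a + b),
      forall m t, W t -> V (y *~ m + t) &
      forall m t u, W t -> W u -> y *~ m = u - t -> m = 0].

Lemma refines_exists (V U : set G) : nbhs 0 V -> nbhs 0 U ->
  exists y W, [/\ nbhs 0 W, symmetric_set W, W `<=` U & refines V y W].
Proof.
move=> V0 U0; have [Vh [Vh0 _ VhV]] := nbhs0_symmetric_half V0.
have [y y0 yVh] := not_NSS_cyclic_sub nNSS Vh0.
have [Z [Z0 Zy]] := cdG (ex_intro _ 0 (esym (mulr0z y))).
have [W [W0 symW WW]] := nbhs0_symmetric_half (filterI Vh0 (filterI Z0 U0)).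
have WVh t : W t -> (Vh `&` (Z `&` U)) t.
  by move=> Wt; rewrite -[t]addr0; apply: WW => //; exact: nbhs_singleton.
exists y, W; split=> // [t /WVh[_ []] //|]; split.
- by move=> a b /WVh[Vha _] /WVh[Vhb _]; exact: VhV.
- by move=> m t /WVh[Vht _]; apply: VhV => //; apply: yVh; exists m.
- move=> m t u Wt Wu ymE; apply: torsion_free_mulrz_eq0 tfG y0 _.
  by apply: Zy; [exists m|rewrite ymE; have [_ []] := WW _ _ Wu (symW _ Wt)].
Qed.

Lemma adapted_exists : metrizable G ->
  exists (y : nat -> G) (V : nat -> set G), adapted y V.
Proof.
move=> metG; have [B [B0 Bbase]] := metrizable_countable_nbhs metG 0.
pose P (V : set G) := nbhs 0 V /\ symmetric_set V.
have step k (V : set G) : P V -> exists y W, P W /\ (W `<=` B k /\ refines V y W).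
  by case=> V0 _; have [y [W [? ? ? ?]]] := refines_exists V0 (B0 k); exists y, W.
have [y [V [_ yV]]] := iterate_choice (conj filterT (fun _ _ => I) : P setT) step.
exists y, V; split=> [k|U /Bbase[k BU]|k|k|k|k].
- exact: (yV k).1.1.
- by exists k.+1 => x /(yV k).2.1/BU.
- exact: (yV k).1.2.
- by case: (yV k).2.2.
- by case: (yV k).2.2.
- by case: (yV k).2.2.
Qed.

End Construction.

Section BlockSums.
Variables (G : topologicalZmodType) (y : nat -> G).

Definition block_sum (j n : nat) (c : ZN) : G := \sum_(j <= i < n) y i *~ c i.

Lemma block_sum_cat i j n c : (i <= j <= n)%N ->
  block_sum i n c = block_sum i j c + block_sum j n c.
Proof. by case/andP=> ij jn; rewrite /block_sum -big_cat_nat. Qed.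

Lemma block_sum_eq0 j n c :
  (forall i, (j <= i < n)%N -> c i = 0) -> block_sum j n c = 0.
Proof. by move=> c0; rewrite /block_sum big_nat big1 // => i /c0 ->; rewrite mulr0z. Qed.

Lemma block_sumD j n a b : block_sum j n (a + b) = block_sum j n a + block_sum j n b.
Proof. by rewrite /block_sum -big_split; apply: eq_bigr => i _; exact: mulrzDr. Qed.

Lemma block_sum_recr j n c : (j <= n)%N ->
  block_sum j n.+1 c = block_sum j n c + y n *~ c n.
Proof. by move=> jn; rewrite /block_sum big_nat_recr. Qed.

Lemma psum_cvg_finsupp a : finsupp a ->
  exists l : G, (fun n => block_sum 0 n a) @ \oo --> l.
Proof.
case=> N aN; exists (block_sum 0 N a) => U U0; exists N => // n Nn /=.
rewrite (@block_sum_cat 0 N) ?Nn // [block_sum N n a]block_sum_eq0 ?addr0.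
  exact: nbhs_singleton.
by move=> i /andP[/aN].
Qed.

End BlockSums.

Section AdaptedSums.
Variables (G : topologicalZmodType) (y : nat -> G) (V : nat -> set G).
Hypothesis yV : adapted y V.
Local Notation block_sum := (block_sum y).

Lemma adapted0 k : V k 0.
Proof. exact: nbhs_singleton (adapted_nbhs yV k). Qed.

Lemma adapted_decr k : V k.+1 `<=` V k.
Proof. by move=> x Vx; rewrite -[x]addr0; apply: (adapted_add yV) => //; exact: adapted0. Qed.

Lemma block_sum_in j n c : V j (block_sum j n c).
Proof.
have [jn|nj] := leqP j n; last first.
  by rewrite /block_sum big_geq ?(ltnW nj) //; exact: adapted0.
rewrite -(subnKC jn); move: (n - j)%N => m; clear jn; elim: m j => [|m IH] j.
  by rewrite addn0 /block_sum big_geq //; exact: adapted0.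
rewrite /block_sum big_ltn ?addnS ?ltnS ?leq_addr // -addSn.
exact: (adapted_cyclic yV).
Qed.


Lemma psum_coef_eq0 k c t u : V k t -> V k u -> block_sum 0 k c + t = u ->
  forall i, (i < k)%N -> c i = 0.
Proof.
elim: k t => [//|k IH] t Vt Vu.
rewrite block_sum_recr // -addrA => ck_u.
have c_k : forall i, (i < k)%N -> c i = 0.
  by apply: (IH _ _ (adapted_decr Vu) ck_u); exact: (adapted_cyclic yV).
have ck : c k = 0.
  by apply: (adapted_discrete yV Vt Vu); rewrite -ck_u block_sum_eq0 ?add0r ?addrK.
by move=> i; rewrite ltnS leq_eqVlt => /orP[/eqP -> //|/c_k].
Qed.

Lemma psum_cauchy a : group_cauchy (fun n => block_sum 0 n a).
Proof.
move=> U /(adapted_shrink yV)[K VU]; exists K.+1 => m n Km Kn.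
rewrite (@block_sum_cat _ y 0 K.+1 m) ?Km // (@block_sum_cat _ y 0 K.+1 n) ?Kn //.
rewrite opprD addrACA subrr add0r.
by apply/VU/(adapted_add yV); [|apply: (adapted_sym yV)]; exact: block_sum_in.
Qed.

Section Embedding.
Variable A : set ZN.
Hypotheses (hsG : hausdorff_space G) (subA : is_subgroup A)
  (A_cvg : forall a, A a -> exists l : G, (fun n => block_sum 0 n a) @ \oo --> l).

Definition emb (a : ZN) : G := xget 0 [set l | (fun n => block_sum 0 n a) @ \oo --> l].

Lemma emb_cvg a : A a -> (fun n => block_sum 0 n a) @ \oo --> emb a.
Proof. by move/A_cvg/(xgetPex 0). Qed.

Lemma embD a b : A a -> A b -> emb (a + b) = emb a + emb b.
Proof.
move=> Aa Ab; apply: (cvg_unique hsG (emb_cvg (subgroupD subA Aa Ab))).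
rewrite /= (_ : (fun n => _) = (fun n => block_sum 0 n a + block_sum 0 n b)).
  exact: cvg_addG (emb_cvg Aa) (emb_cvg Ab).
by apply: funext => n; exact: block_sumD.
Qed.

Lemma embB a b : A a -> A b -> emb (a - b) = emb a - emb b.
Proof. exact: (additive_onB subA embD). Qed.

Lemma emb_coef_eq0 k c : A c -> V k.+1 (emb c) -> forall i, (i < k)%N -> c i = 0.
Proof.
move=> Ac Vc; have [N _ N_near] := emb_cvg Ac (nbhs0_sub (emb c) (adapted_nbhs yV k.+1)).
pose n := maxn N k; have /N_near Vn : (N <= n)%N by exact: leq_maxl.
apply: (psum_coef_eq0 (block_sum_in k n c) (u := block_sum 0 n c)).
  rewrite -[block_sum 0 n c](addrNK (emb c)) addrC.
  exact: (adapted_add yV Vc Vn).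
by rewrite (@block_sum_cat _ y 0 k n) // /n leq_maxr.
Qed.

Lemma emb_in_adapted k c : A c -> (forall i, (i < k.+1)%N -> c i = 0) -> V k (emb c).
Proof.
move=> Ac c0; have [N _ N_near] := emb_cvg Ac (nbhs0_sub (emb c) (adapted_nbhs yV k.+1)).
pose n := maxn N k.+1; have /N_near Vn : (N <= n)%N by exact: leq_maxl.
have -> : emb c = block_sum 0 n c + - (block_sum 0 n c - emb c).
  by rewrite opprB addrC subrK.
apply: (adapted_add yV); last exact: (adapted_sym yV).
rewrite (@block_sum_cat _ y 0 k.+1) ?leq_maxr // block_sum_eq0 ?add0r.
  exact: block_sum_in.
by move=> i /andP[_]; exact: c0.
Qed.

Lemma emb_inj a b : A a -> A b -> emb a = emb b -> a = b.
Proof.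
move=> Aa Ab ab; apply: funext => i; apply/eqP; rewrite -subr_eq0; apply/eqP.
apply: (@emb_coef_eq0 i.+1 (a - b)) => //; first exact: subgroupB.
by rewrite embB // ab subrr; exact: adapted0.
Qed.

Lemma emb_continuous a : A a -> forall W : set G, nbhs (emb a) W ->
  exists U : set ZN, nbhs a U /\ forall b, A b -> U b -> W (emb b).
Proof.
move=> Aa W /nbhs_translate/(adapted_shrink yV)[K VW].
exists (cylinder K.+1 a); split=> [|b Ab ab]; first exact: cylinder_nbhs.
rewrite -(subrK (emb a) (emb b)) addrC -embB //; apply/VW/emb_in_adapted.
  exact: subgroupB.
by move=> i iK; change (b i - a i = 0); rewrite ab ?subrr.
Qed.

Lemma emb_open a : A a -> forall U : set ZN, nbhs a U ->
  exists W : set G, nbhs (emb a) W /\ forall b, A b -> W (emb b) -> U b.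
Proof.
move=> Aa U /nbhs_cylinder[K aKU].
exists (fun x => V K.+1 (x - emb a)); split=> [|b Ab Vba].
  exact: nbhs0_sub (adapted_nbhs yV K.+1).
apply: aKU => i iK; apply/eqP; rewrite -subr_eq0; apply/eqP.
by apply: (@emb_coef_eq0 K (b - a)) => //; [exact: subgroupB|rewrite embB].
Qed.

Lemma emb_copy : contains_copy_of A G.
Proof.
exists (emb @` A); split; first exact: (subgroup_image subA embB subA (@subset_refl _ A)).
exists emb; split=> //; split; first exact: embD.
by split; [exact: emb_inj|split; [exact: emb_continuous|exact: emb_open]].
Qed.

End Embedding.
End AdaptedSums.

Lemma copy_not_NSS (G : topologicalZmodType) (A : set ZN) :
  is_subgroup A -> (forall K, A (delta_seq K)) -> contains_copy_of A G -> ~ NSS G.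
Proof.
move=> subA Adelta [_ [_ [f [_ [fD [f_inj [f_cont _]]]]]]] [U [U0 U_small]].
have fB := additive_onB subA fD.
have f0 : f 0 = 0 by rewrite -(subrr 0) fB ?subrr //; exact: subgroup0.
have [U' [U'0 U'U]] : exists U' : set ZN, nbhs (0 : ZN) U' /\ forall b, A b -> U' b -> U (f b).
  by apply: f_cont; [exact: subgroup0|rewrite f0].
have [K KU'] := nbhs_cylinder U'0.
have subAK : is_subgroup (f @` (A `&` cylinder K 0)).
  apply: (subgroup_image subA fB); first exact: subgroupI (cylinder0_subgroup K).
  by move=> a [].
have /(U_small _ subAK) AK0 : f @` (A `&` cylinder K 0) `<=` U.
  by move=> _ [a [Aa /KU' U'a] <-]; exact: U'U.
have : (f @` (A `&` cylinder K 0)) (f (delta_seq K)).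
  by exists (delta_seq K) => //; split=> // i iK; rewrite /delta_seq ltn_eqF.
rewrite AK0 /= -f0 => /(f_inj _ _ (Adelta K) (subgroup0 subA))/(congr1 (fun g : ZN => g K)).
by rewrite /delta_seq eqxx.
Qed.

Theorem corollary8p3 (G : topologicalZmodType) :
  torsion_free G -> metrizable G -> cyclic_subgroups_discrete G ->
  ((~ NSS G <-> contains_copy_of finsupp G) /\
   (group_complete G ->
      (~ NSS G <-> contains_copy_of finsupp G) /\
      (~ NSS G <-> contains_copy_of setT G))).
Proof.
move=> tfG metG cdG.
have hsG := metrizable_hausdorff metG.
have copies : ~ NSS G -> contains_copy_of finsupp G /\
    (group_complete G -> contains_copy_of setT G).
  move=> nNSS; have [y [V yV]] := adapted_exists tfG cdG nNSS metG.
  split; first by apply: (emb_copy yV hsG finsupp_subgroup); exact: psum_cvg_finsupp.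
  move=> cG; apply: (emb_copy yV hsG) => [|a _]; first by split.
  by apply: cG; exact: (psum_cauchy yV).
have finsupp_iff : ~ NSS G <-> contains_copy_of finsupp G.
  by split=> [/copies[]//|]; exact: copy_not_NSS finsupp_subgroup finsupp_delta.
split=> // cG; split=> //; split; first by case/copies=> _; apply.
by apply: copy_not_NSS => //; split.
Qed.
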